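(* Let $x\in\mathbb C^n\setminus\Delta$ be such that the weighted arrangement $(\mathcal A(x),a)$ is unbalanced. Then for every $j\in J$ the operator of multiplication by $[a_j/f_j]$ in $\mathcal O(C_{\mathcal A(x),a})$ equals the operator $K_j(x)$; that is, for every $k$-element sequence $i_1,\dots,i_k$ in $J$, $$\Big[\frac{a_j}{f_j}\Big]\cdot w_{i_1,\dots,i_k}=K_j(x)\,w_{i_1,\dots,i_k}.$$
   Context: Let $0<k<n$, $J=\{1,\dots,n\}$. On $\mathbb C^k$ (coordinates $t_1,\dots,t_k$) fix nonzero linear functions $g_j=b^1_jt_1+\dots+b^k_jt_k$, $j\in J$, spanning $(\mathbb C^k)^*$. For $x\in\mathbb C^n$, $\mathcal A(x)$ is the arrangement in $\mathbb C^k$ of hyperplanes $H_j(x)=\{f_j=0\}$, $f_j=g_j+x_j$, with complement $U(\mathcal A(x))$. For $I=\{i_1,\dots,i_k\}$ (ordered) let $d_{i_1,\dots,i_k}=\det_{i,l=1}^k(b^i_{i_l})$. Circuits and discriminant: a subset $C\subset J$ is a circuit if $(g_i)_{i\in C}$ are linearly dependent but every proper subset is independent. For each circuit $C$ fix a nonzero collection $(\lambda^C_i)_{i\in J}$, $\lambda^C_i=0$ for $i\notin C$, with $\sum_i\lambda^C_ig_i=0$, and set $f_C(z)=\sum_i\lambda^C_iz_i$. The discriminant is $\Delta=\bigcup_C\{f_C=0\}\subset\mathbb C^n$; for $x\notin\Delta$, $\mathcal A(x)$ has normal crossings. A subset of $J$ is independent if the corresponding $g_i$ are linearly independent. Weights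 $a\in(\mathbb C^\times)^n$; $\Phi=\sum_ja_j\log f_j$. $\mathcal O(C_{\mathcal A(x),a})=\mathcal O(U(\mathcal A(x)))/I$, with $I$ the ideal generated by $\partial\Phi/\partial t_i=\sum_jb^i_ja_j/f_j$, $i=1,\dots,k$; $[f]$ is the class of $f$. Marked elements: $w_{i_1,\dots,i_k}=d_{i_1,\dots,i_k}\,[a_{i_1}/f_{i_1}]\cdots[a_{i_k}/f_{i_k}]\in\mathcal O(C_{\mathcal A(x),a})$; they are skew-symmetric in the indices and vanish for dependent index sets, and (for unbalanced weight) they span $\mathcal O(C_{\mathcal A(x),a})$. Operators: for a circuit $C$, listed in some order as $i_1,\dots,i_r$, and $C_m=C\setminus\{i_m\}$, define $L_C$ on marked elements: $L_C(w_{j_1,\dots,j_k})=0$ if $|\{j_1,\dots,j_k\}\cap C|<r-1$; if $\{j_1,\dots,j_k\}\cap C=C_m$, write (using skew-symmetry) $w_{j_1,\dots,j_k}=\pm w_{i_1,\dots,\widehat{i_m},\dots,i_r,s_1,\dots,s_{k-r+1}}$ with $\{s_1,\dots,s_{k-r+1}\}=\{j_1,\dots,j_k\}\setminus C_m$, and set $L_C(w_{i_1,\dots,\widehat{i_m},\dots,i_r,s_1,\dots,s_{k-r+1}})=(-1)^m\sum_{l=1}^r(-1)^la_{i_l}w_{i_1,\dots,\widehat{i_l},\dots,i_r,s_1,\dots,s_{k-r+1}}$. Then $K_j(x)=\sum_{C}\frac{\lambda^C_j}{f_C(x)}L_C$, the sum over all circuits. Unbalanced: for an arrangement in $\mathbb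 C^k$ with weights $a_j$, adjoin $H_\infty=\mathbb P^k\setminus\mathbb C^k$ with weight $-\sum_ja_j$; the weight of an edge (nonempty intersection of hyperplanes) is the sum of the weights of the hyperplanes containing it; an edge is dense if the hyperplanes containing it form an irreducible arrangement (not splittable, after a coordinate change, into two nonempty groups in disjoint coordinates). The weighted arrangement is unbalanced if no dense edge of the projective arrangement has weight $0$. *)

From mathcomp Require Import all_boot all_algebra.
From mathcomp Require Import boolp reals.
From mathcomp.real_closed Require Import complex.
From mathcomp Require Import mpoly.

Set Implicit Arguments.
Unset Strict Implicit.
Unset Printing Implicit Defensive.

Import GRing.Theory Num.Theory.
Local Open Scope ring_scope.

(* Data: b : 'M_(k,n) with  b i j = b^i_j, so g_j = sum_i b i j * t_i
   (the j-th column of b); x : C^n; weights a : C^n; t : C^k.          *)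

Definition fj (R : realType) (k n : nat) (b : 'M[R[i]]_(k, n))
  (x : 'I_n -> R[i]) (j : 'I_n) (t : 'I_k -> R[i]) : R[i] :=
  \sum_(i < k) b i j * t i + x j.

Definition inU (R : realType) (k n : nat) (b : 'M[R[i]]_(k, n))
  (x : 'I_n -> R[i]) (t : 'I_k -> R[i]) : Prop :=
  forall j : 'I_n, fj b x j t != 0.

(* O(U(A(x))) = C[t][1/f_1,...,1/f_n], realised as functions on U:
   g is regular iff g = p / prod_j f_j^{m_j} on U for a polynomial p. *)
Definition regular (R : realType) (k n : nat) (b : 'M[R[i]]_(k, n))
  (x : 'I_n -> R[i]) (g : ('I_k -> R[i]) -> R[i]) : Prop :=
  exists (p : {mpoly R[i][k]}) (m : 'I_n -> nat),
    forall t, inU b x t -> g t = p.@[t] / \prod_(j < n) (fj b x j t) ^+ (m j).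

Definition dPhi (R : realType) (k n : nat) (b : 'M[R[i]]_(k, n))
  (x a : 'I_n -> R[i]) (i : 'I_k) (t : 'I_k -> R[i]) : R[i] :=
  \sum_(j < n) b i j * a j / fj b x j t.

(* [g] = [h] in O(C_{A(x),a}) = O(U(A(x))) / I, I the ideal generated by
   the dPhi i: g - h = sum_i c_i dPhi_i with c_i in O(U(A(x))).          *)
Definition qeq (R : realType) (k n : nat) (b : 'M[R[i]]_(k, n))
  (x a : 'I_n -> R[i]) (g h : ('I_k -> R[i]) -> R[i]) : Prop :=
  exists c : 'I_k -> ('I_k -> R[i]) -> R[i],
    (forall i, regular b x (c i)) /\
    forall t, inU b x t -> g t - h t = \sum_(i < k) c i t * dPhi b x a i t.

Definition dmk (R : realType) (k n : nat) (b : 'M[R[i]]_(k, n))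
  (s : seq 'I_n) : R[i] :=
  \det (\matrix_(i < k, l < k) nth 0 [seq b i j | j <- s] l).

Definition wmk (R : realType) (k n : nat) (b : 'M[R[i]]_(k, n))
  (x a : 'I_n -> R[i]) (s : seq 'I_n) (t : 'I_k -> R[i]) : R[i] :=
  dmk b s * \prod_(j <- s) (a j / fj b x j t).

Definition indep (R : realType) (k n : nat) (b : 'M[R[i]]_(k, n))
  (S : {set 'I_n}) : bool :=
  row_free (\matrix_(l < #|S|, i < k) b i (enum_val l)).

Definition circuit (R : realType) (k n : nat) (b : 'M[R[i]]_(k, n))
  (C : {set 'I_n}) : bool :=
  ~~ indep b C && [forall D : {set 'I_n}, (D \proper C) ==> indep b D].

Definition circuit_coeffs (R : realType) (k n : nat) (b : 'M[R[i]]_(k, n))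
  (lam : {set 'I_n} -> 'I_n -> R[i]) : Prop :=
  forall C : {set 'I_n}, circuit b C ->
    [/\ forall i, i \notin C -> lam C i = 0,
        exists i, lam C i != 0
      & forall r : 'I_k, \sum_(i < n) lam C i * b r i = 0].

Definition fC (R : realType) (n : nat) (lam : {set 'I_n} -> 'I_n -> R[i])
  (C : {set 'I_n}) (z : 'I_n -> R[i]) : R[i] :=
  \sum_(i < n) lam C i * z i.

Definition notin_disc (R : realType) (k n : nat) (b : 'M[R[i]]_(k, n))
  (lam : {set 'I_n} -> 'I_n -> R[i]) (z : 'I_n -> R[i]) : Prop :=
  forall C : {set 'I_n}, circuit b C -> fC lam C z != 0.

(* number of inversions of the permutation pi with s_p = u_{pi(p)} ;
   (-1)^invs s u is the sign with  w_s = (-1)^(invs s u) w_u  *)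
Definition invs (n : nat) (s u : seq 'I_n) : nat :=
  \sum_(y <- s) \sum_(z <- s) ((index y s < index z s) && (index z u < index y u))%N.

(* L_C(w_s) as an element of O(U) (a combination of marked elements).
   C is listed increasingly as e = i_1,...,i_r (0-based positions here).
   If s is duplicate-free and {s} meets C in C minus one element i_m, then
   w_s = eps * w_{C_m, s'} with s' the elements of s outside C (in their order
   in s), and L_C(w_s) = eps (-1)^m sum_l (-1)^l a_{i_l} w_{C_l, s'}.
   Otherwise (|{s} cap C| < r-1, or w_s = 0 because s has a repetition or
   contains C) the value is 0.                                            *)
Definition LC (R : realType) (k n : nat) (b : 'M[R[i]]_(k, n))
  (x a : 'I_n -> R[i]) (C : {set 'I_n}) (s : seq 'I_n) (t : 'I_k -> R[i])
  : R[i] :=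
  let e := enum C in
  let S := [set j in s] in
  if uniq s && (#|S :&: C| == #|C|.-1)%N then
    match [pick im in C | im \notin S] with
    | Some im =>
        let s' := [seq j <- s | j \notin C] in
        let u := rem im e ++ s' in
        (-1) ^+ invs s u * (-1) ^+ index im e *
        \sum_(il <- e) (-1) ^+ index il e * a il * wmk b x a (rem il e ++ s') t
    | None => 0
    end
  else 0.

Definition Kj (R : realType) (k n : nat) (b : 'M[R[i]]_(k, n))
  (lam : {set 'I_n} -> 'I_n -> R[i]) (x a : 'I_n -> R[i]) (j : 'I_n)
  (s : seq 'I_n) (t : 'I_k -> R[i]) : R[i] :=
  \sum_(C : {set 'I_n} | circuit b C) lam C j / fC lam C x * LC b x a C s t.

(* Homogeneous coordinates (t_0, t_1..t_k) on C^{k+1}; hyperplanes indexed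
   by option 'I_n: Some j is the closure of H_j(x) : x_j t_0 + g_j(t) = 0,
   None is H_infty : t_0 = 0.  nv gives the defining linear form.       *)
Definition nv (R : realType) (k n : nat) (b : 'M[R[i]]_(k, n))
  (x : 'I_n -> R[i]) (h : option 'I_n) (p : 'I_k.+1) : R[i] :=
  match h with
  | Some j => match unlift ord0 p with None => x j | Some i => b i j end
  | None => if p == ord0 then 1 else 0
  end.

Definition lform (R : realType) (k n : nat) (b : 'M[R[i]]_(k, n))
  (x : 'I_n -> R[i]) (h : option 'I_n) (y : 'I_k.+1 -> R[i]) : R[i] :=
  \sum_(p < k.+1) nv b x h p * y p.

Definition inInter (R : realType) (k n : nat) (b : 'M[R[i]]_(k, n))
  (x : 'I_n -> R[i]) (S : {set option 'I_n}) (y : 'I_k.+1 -> R[i]) : Prop :=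
  forall h, h \in S -> lform b x h y = 0.

Definition is_edge (R : realType) (k n : nat) (b : 'M[R[i]]_(k, n))
  (x : 'I_n -> R[i]) (S : {set option 'I_n}) : Prop :=
  S != set0 /\ exists y, y != (fun _ => 0) /\ inInter b x S y.

Definition contains (R : realType) (k n : nat) (b : 'M[R[i]]_(k, n))
  (x : 'I_n -> R[i]) (S : {set option 'I_n}) (h : option 'I_n) : Prop :=
  forall y, inInter b x S y -> lform b x h y = 0.

Definition hweight (R : realType) (n : nat) (a : 'I_n -> R[i])
  (h : option 'I_n) : R[i] :=
  match h with Some j => a j | None => - \sum_(j < n) a j end.

(* an arrangement (given by a set T of hyperplanes of C^{k+1}) is reducible
   if after a linear coordinate change t = M y it splits into two nonempty
   groups A, B depending on disjoint sets of coordinates (P and its complement) *)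
Definition reducible (R : realType) (k n : nat) (b : 'M[R[i]]_(k, n))
  (x : 'I_n -> R[i]) (T : option 'I_n -> Prop) : Prop :=
  exists (A B : option 'I_n -> Prop) (M : 'M[R[i]]_(k.+1)) (P : {set 'I_k.+1}),
    [/\ (forall h, (T h <-> A h \/ B h) /\ ~ (A h /\ B h)),
        (exists h, A h) /\ (exists h, B h), M \in unitmx,
        (forall h q, A h -> q \notin P -> \sum_(p < k.+1) nv b x h p * M p q = 0)
      & (forall h q, B h -> q \in P -> \sum_(p < k.+1) nv b x h p * M p q = 0)].

Definition dense (R : realType) (k n : nat) (b : 'M[R[i]]_(k, n))
  (x : 'I_n -> R[i]) (S : {set option 'I_n}) : Prop :=
  ~ reducible b x (contains b x S).

Definition unbalanced (R : realType) (k n : nat) (b : 'M[R[i]]_(k, n))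
  (x a : 'I_n -> R[i]) : Prop :=
  forall S : {set option 'I_n}, is_edge b x S -> dense b x S ->
    \sum_(h : option 'I_n) (if `[< contains b x S h >] then hweight a h else 0) != 0.

(* If d_s = 0, every L_C(w_s) is a multiple of d_s and both sides vanish.
   Otherwise the g_i, i in s, form a basis, and each m outside s lies in a
   unique circuit C_m contained in s + {m}; L_C(w_s) = 0 unless C is such a
   fundamental circuit.  Reordering each index sequence of L_{C_m}(w_s) into s
   and trading g_m for g_l through the circuit relation sum_l lam_l g_l = 0
   makes every summand a multiple of w_s, and the coefficients add up to
   sum_l lam_l f_l = f_{C_m}(x).  Hence, with lam = lam^{C_m},
     K_j(x) w_s = sum_{m notin s} (lam_j / lam_m) [a_m/f_m] w_s.
   If j is not in s only m = j contributes.  If j is in s, take y in C^k with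
   g_i(y) = delta_ij for i in s: then lam_j / lam_m = - g_m(y), and the
   difference of the two sides is w_s sum_r y_r dPhi/dt_r, which lies in I. *)

From mathcomp Require Import all_boot all_algebra perm.
From mathcomp Require Import boolp reals.
From mathcomp.real_closed Require Import complex.
From mathcomp Require Import mpoly.
From mathcomp Require Import zify ring.
Set Implicit Arguments.
Unset Strict Implicit.
Unset Printing Implicit Defensive.
Import GRing.Theory Num.Theory.
Local Open Scope ring_scope.

Section Index.
Variable T : eqType.

Lemma index_rem (x y : T) e : x != y ->
  (index y (rem x e) + (index x e < index y e))%N = index y e.
Proof.
move=> nxy; elim: e => [//|z e IH] /=.
case: (eqVneq z x) => [->|nzx]; first by rewrite (negPf nxy) /= addn1.
by rewrite /=; case: ifP => // _; rewrite ltnS addSn IH.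
Qed.

Lemma index_rem_ltn (y c d : T) u : c \in u -> d \in u -> y \in u -> c != y -> d != y ->
  (index c (rem y u) < index d (rem y u))%N = (index c u < index d u)%N.
Proof.
move=> cu du yu ncy ndy.
have ec := index_rem u (ltac:(by rewrite eq_sym) : y != c).
have ed := index_rem u (ltac:(by rewrite eq_sym) : y != d).
have neq z : z \in u -> z != y -> index z u != index y u.
  by move=> zu; apply: contra_neq => /(congr1 (nth y u)); rewrite !nth_index.
move: (neq c cu ncy) (neq d du ndy) ec ed.
case: (ltnP (index y u) (index c u)); case: (ltnP (index y u) (index d u)) => /=;
  move=> *; apply/idP/idP; lia.
Qed.

Lemma index_rem2 (y z : T) e : y \in e -> z \in e -> y != z ->
  (index y (rem z e) + index z (rem y e)).+1 = (index y e + index z e)%N.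
Proof.
move=> ye ze nyz.
have iy := index_rem e (ltac:(by rewrite eq_sym) : z != y).
have iz := index_rem e nyz.
have : index y e != index z e by apply: contra_neq nyz => /(congr1 (nth y e)); rewrite !nth_index.
by move: iy iz; case: ltngtP => //= *; lia.
Qed.

Lemma count_index_lt (u : seq T) i : uniq u ->
  count (fun c => (index c u < i)%N) u = minn i (size u).
Proof.
elim: u i => [|z u IH] i /=; first by rewrite minn0.
case/andP => zu uu; rewrite eqxx.
rewrite (@eq_in_count _ _ (fun c => (index c u < i.-1)%N)); last first.
  move=> c cu /=; have -> : (z == c) = false by apply: contraNF zu => /eqP ->.
  by case: i.
by rewrite IH //; case: i => [|i] /=; rewrite ?min0n // minnSS add1n.
Qed.

Lemma remC (y z : T) q : uniq q -> rem y (rem z q) = rem z (rem y q).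
Proof.
move=> uq; rewrite (rem_filter z uq) (rem_filter y uq).
rewrite (rem_filter y (filter_uniq _ uq)) (rem_filter z (filter_uniq _ uq)).
by rewrite -!filter_predI; apply: eq_filter => w /=; rewrite andbC.
Qed.

End Index.

Lemma invs_cons (n : nat) (y : 'I_n) s u : uniq (y :: s) -> perm_eq (y :: s) u ->
  invs (y :: s) u = (index y u + invs s (rem y u))%N.
Proof.
move=> uys pu; have yu : y \in u by rewrite -(perm_mem pu) mem_head.
have uu : uniq u by rewrite -(perm_uniq pu).
have ps : perm_eq s (rem y u).
  by rewrite -(perm_cons y); apply: (perm_trans pu); apply: perm_to_rem.
case/andP: uys => ys us.
have ney z : z \in s -> (y == z) = false by move=> zs; apply: contraNF ys => /eqP ->.
have inu z : z \in s -> z \in u by move=> zs; rewrite -(perm_mem pu) inE zs orbT.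
rewrite /invs !big_cons /= eqxx ltnn add0n; congr (_ + _)%N.
  rewrite (eq_big_seq (fun c => ((index c u < index y u)%N : nat))); last first.
    by move=> c cs /=; rewrite ney.
  transitivity (count (fun c => (index c u < index y u)%N) s).
    by rewrite -sumn_count sumnE big_map.
  rewrite ((seq.permP ps) _) (rem_filter _ uu) count_filter.
  rewrite (@eq_count _ _ (fun c => (index c u < index y u)%N)); last first.
    by move=> c /=; case: (eqVneq c y) => [->|]; rewrite ?ltnn ?andbF ?andbT.
  by rewrite count_index_lt //; apply/minn_idPl; apply: index_size.
apply: eq_big_seq => c cs; rewrite big_cons /= ney // eqxx /= add0n.
apply: eq_big_seq => d ds; rewrite ney // ltnS.
have nyz z : z \in s -> z != y by move=> zs; rewrite eq_sym (ney z zs).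
by rewrite (index_rem_ltn (inu d ds) (inu c cs) yu (nyz d ds) (nyz c cs)).
Qed.

Section Minors.
Variables (R : realType) (k n : nat) (b : 'M[R[i]]_(k, n)).

Definition cols_mx (s : seq 'I_n) : 'M[R[i]]_k :=
  \matrix_(i < k, l < k) nth 0 [seq b i j | j <- s] l.

Lemma dmkE s : dmk b s = \det (cols_mx s). Proof. by []. Qed.

Lemma dmk_swap p q y z : size (p ++ y :: z :: q) = k ->
  dmk b (p ++ y :: z :: q) = - dmk b (p ++ z :: y :: q).
Proof.
move=> hs.
have h1 : (size p < k)%N by move: hs; rewrite size_cat /=; lia.
have h2 : ((size p).+1 < k)%N by move: hs; rewrite size_cat /=; lia.
pose i1 := Ordinal h1; pose i2 := Ordinal h2.
rewrite !dmkE.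
have -> : cols_mx (p ++ y :: z :: q) = xcol i1 i2 (cols_mx (p ++ z :: y :: q)).
  apply/matrixP => i l; rewrite !mxE !map_cat !nth_cat !size_map.
  case: tpermP => [->|->|hl1 hl2] /=; rewrite ?ltnn ?subnn ?subSnn ?ltnNge ?leqnSn //=.
  case: ltnP => // hl; case hd: (nat_of_ord l - size p)%N => [|[|d]] //=.
  - by case: hl1; apply: val_inj => /=; lia.
  - by case: hl2; apply: val_inj => /=; lia.
rewrite xcolE det_mulmx det_perm odd_tperm.
have -> : (i1 != i2) by rewrite -(inj_eq val_inj) /= neq_ltn ltnSn.
by rewrite expr1 mulrN1.
Qed.

Lemma dmk_move_front y p q r : y \in q -> size (p ++ q ++ r) = k ->
  dmk b (p ++ q ++ r) = (-1) ^+ index y q * dmk b (p ++ y :: rem y q ++ r).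
Proof.
elim: q p => [//|z q IH] p /=.
case: eqP => [<- _ _|/eqP nyz]; first by rewrite expr0 mul1r.
rewrite in_cons eq_sym (negPf nyz) /= => yq hs.
rewrite -cat_rcons IH ?cat_rcons //= dmk_swap ?exprS; first by ring.
by move: hs; rewrite !size_cat /= !size_cat size_rem //; case: q yq {IH} => //= *; lia.
Qed.

Lemma dmk_perm s u p : uniq s -> perm_eq s u -> size (p ++ s) = k ->
  dmk b (p ++ s) = (-1) ^+ invs s u * dmk b (p ++ u).
Proof.
elim: s u p => [|y s IH] u p us pu hs.
  have -> : u = [::] by apply/nilP; rewrite /nilp -(perm_size pu).
  by rewrite /invs big_nil expr0 mul1r.
have yu : y \in u by rewrite -(perm_mem pu) mem_head.
have hsu : size (p ++ u ++ [::]) = k by rewrite cats0 size_cat -(perm_size pu) -size_cat.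
have ps : perm_eq s (rem y u).
  by rewrite -(perm_cons y); apply: (perm_trans pu); apply: perm_to_rem.
case/andP: (us) => _ us'.
have e1 := dmk_move_front yu hsu; rewrite !cats0 in e1.
have e2 := IH (rem y u) (rcons p y) us' ps; rewrite !cat_rcons in e2.
by rewrite e2 // e1 invs_cons // exprD -mulrA mulrCA signrMK.
Qed.

Lemma dmk_not_uniq s : size s = k -> ~~ uniq s -> dmk b s = 0.
Proof.
move=> hs nu; have [y sy] : exists y, y \in s.
  by case: s hs nu => [//|y s] _ _; exists y; rewrite mem_head.
case/(uniqPn y): nu => p [q [pq qs eqn]].
have hp : (p < k)%N by rewrite -hs; lia.
have hq : (q < k)%N by rewrite -hs.
rewrite dmkE -det_tr.
apply: (@determinant_alternate _ _ _ (Ordinal hp) (Ordinal hq)).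
  by rewrite -(inj_eq val_inj) /= neq_ltn pq.
by move=> r; rewrite !mxE /= (nth_map y) ?(nth_map y) ?eqn //; lia.
Qed.

Lemma dmk_neq0_uniq s : size s = k -> dmk b s != 0 -> uniq s.
Proof. by move=> hs; apply: contraNT => nu; rewrite dmk_not_uniq. Qed.

Lemma dmk_cons_lin (k0 : (0 < k)%N) (c : 'I_n -> R[i]) y s :
  (forall r, b r y = \sum_l c l * b r l) ->
  dmk b (y :: s) = \sum_l c l * dmk b (l :: s).
Proof.
move=> hy; pose c0 := Ordinal k0.
have cof z r : cofactor (cols_mx (z :: s)) r c0 = cofactor (cols_mx (y :: s)) r c0.
  by rewrite /cofactor; congr (_ * \det _); apply/matrixP => i l; rewrite !mxE.
have ent z r : cols_mx (z :: s) r c0 = b r z by rewrite mxE.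
rewrite dmkE (expand_det_col _ c0).
under eq_bigr => r _ do rewrite ent hy mulr_suml.
rewrite exchange_big /=; apply: eq_bigr => l _.
rewrite dmkE (expand_det_col _ c0) big_distrr /=; apply: eq_bigr => r _.
by rewrite ent (cof l) /cofactor !mulrA.
Qed.

End Minors.

Section Independence.
Variables (R : realType) (k n : nat) (b : 'M[R[i]]_(k, n)).

Lemma indep_rel_eq0 (D : {set 'I_n}) (mu : 'I_n -> R[i]) : indep b D ->
  (forall i, i \notin D -> mu i = 0) ->
  (forall r, \sum_i mu i * b r i = 0) -> forall i, mu i = 0.
Proof.
move=> hD hsupp hrel i; case: (boolP (i \in D)) => iD; last exact: hsupp.
pose v : 'rV[R[i]]_#|D| := \row_l mu (enum_val l).
have : v *m \matrix_(l < #|D|, r < k) b r (enum_val l) == 0.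
  apply/eqP/rowP => r; rewrite !mxE -[RHS](hrel r) [RHS](bigID (mem D)) /=.
  rewrite [X in _ = _ + X]big1 ?addr0 => [|l /hsupp ->]; last by rewrite mul0r.
  by rewrite [in RHS]big_enum_val; apply: eq_bigr => l _; rewrite !mxE.
rewrite (mulmx_free_eq0 _ hD) => /eqP/rowP/(_ (enum_rank_in iD i)).
by rewrite !mxE (enum_rankK_in iD iD).
Qed.

Lemma dmk_rel_eq0 (s : seq 'I_n) (mu : 'I_n -> R[i]) :
  size s = k -> dmk b s != 0 ->
  (forall i, i \notin s -> mu i = 0) ->
  (forall r, \sum_i mu i * b r i = 0) -> forall i, mu i = 0.
Proof.
move=> hs hd hsupp hrel i; case: (boolP (i \in s)) => iS; last exact: hsupp.
have us := dmk_neq0_uniq hs hd.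
pose w : 'rV[R[i]]_k := \row_p mu (nth i s p).
have hw : w *m (cols_mx b s)^T = 0.
  apply/rowP => r; rewrite !mxE -[RHS](hrel r) [RHS](bigID (mem s)) /=.
  rewrite [X in _ = _ + X]big1 ?addr0 => [|l /hsupp ->]; last by rewrite mul0r.
  rewrite -big_uniq // (big_nth i) hs big_mkord.
  by apply: eq_bigr => p _; rewrite !mxE (nth_map i) ?hs.
have /eqP/rowP w0 : w == 0.
  by apply: contraNT hd => wn0; rewrite dmkE -det_tr; apply/det0P; exists w.
have hi : (index i s < k)%N by rewrite -hs index_mem.
by move: (w0 (Ordinal hi)); rewrite !mxE nth_index.
Qed.

Lemma not_indep_card (D : {set 'I_n}) : (k < #|D|)%N -> ~~ indep b D.
Proof.
move=> hD; rewrite /indep -row_leq_rank -ltnNge.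
exact: leq_ltn_trans (rank_leq_col _) hD.
Qed.

Lemma circuit_subset (D : {set 'I_n}) : ~~ indep b D ->
  exists2 C : {set 'I_n}, C \subset D & circuit b C.
Proof.
move: {2}#|D| (leqnn #|D|) => N; elim: N D => [|N IH] D hN hD.
  have D0 : D = set0 by apply/eqP; rewrite -cards_eq0 -leqn0.
  exists set0; rewrite -?D0 // /circuit hD.
  by apply/forallP => C; apply/implyP => /proper_card; rewrite D0 cards0.
case: (boolP (circuit b D)) => hc; first by exists D.
move: hc; rewrite /circuit hD /= negb_forall => /existsP [C].
rewrite negb_imply => /andP [pC nC].
have [C' sC' cC'] := IH C (leq_trans (proper_card pC) hN) nC.
by exists C' => //; exact: subset_trans sC' (proper_sub pC).
Qed.

Lemma circuit_coeff_neq0 lam C :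
  circuit_coeffs b lam -> circuit b C -> forall i, i \in C -> lam C i != 0.
Proof.
move=> hcc hC i iC; apply/negP => /eqP h0.
have [hz [l hl] hrel] := hcc C hC.
case/andP: hC => _ /forallP /(_ (C :\ i)); rewrite (properD1 iC) /= => hind.
move: hl; rewrite (@indep_rel_eq0 _ (lam C) hind) ?eqxx // => z.
by rewrite in_setD1 negb_and negbK => /orP [/eqP -> //|]; exact: hz.
Qed.

End Independence.


Definition fundamental (n : nat) (s : seq 'I_n) (C : {set 'I_n}) (m : 'I_n) :=
  [&& m \in C, m \notin s & C :\ m \subset [set x in s]].

Lemma fundamental_mem n (s : seq 'I_n) C m z :
  fundamental s C m -> z \in C -> z != m -> z \in s.
Proof.
case/and3P => _ _ /subsetP hsub zC nzm.
by move: (hsub z); rewrite !inE nzm zC => /(_ isT).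
Qed.

Section Circuits.
Variables (R : realType) (k n : nat) (b : 'M[R[i]]_(k, n)).
Variable lam : {set 'I_n} -> 'I_n -> R[i].
Hypothesis hcc : circuit_coeffs b lam.

Lemma circuit_dmk_exchange (k0 : (0 < k)%N) C m l (r : seq 'I_n) :
  (size r).+1 = k -> circuit b C -> m \in C -> l \in C -> l != m ->
  (forall z, z \in C -> z != m -> z != l -> z \in r) ->
  lam C m * dmk b (m :: r) = - (lam C l * dmk b (l :: r)).
Proof.
move=> hs hC mC lC nlm hr; have [hz _ hrel] := hcc hC.
have lm := circuit_coeff_neq0 hcc hC mC.
pose c z := if z == m then 0 else - (lam C z / lam C m).
rewrite (@dmk_cons_lin _ _ _ b k0 c) => [|q]; last first.
  have hq := hrel q; rewrite (bigD1 m) //= in hq.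
  rewrite (bigD1 m) //= /c eqxx mul0r add0r.
  transitivity (- (lam C m)^-1 * \sum_(z < n | z != m) lam C z * b q z).
    have -> : \sum_(z < n | z != m) lam C z * b q z = - (lam C m * b q m).
      by apply/eqP; rewrite -addr_eq0 addrC hq.
    by field.
  by rewrite big_distrr /=; apply: eq_bigr => z /negPf ->; ring.
rewrite (bigD1 l) //= big1 ?addr0 => [|z nzl]; last first.
  rewrite /c; case: (eqVneq z m) => [_|nzm]; first by rewrite mul0r.
  case: (boolP (z \in C)) => zC; last by rewrite hz // mul0r oppr0 mul0r.
  by rewrite dmk_not_uniq ?mulr0 // /= hr ?(andP nzl).2.
by rewrite /c (negPf nlm); field.
Qed.

Lemma sum_circuit_fj x C t : circuit b C ->
  \sum_(l <- enum C) lam C l * fj b x l t = fC lam C x.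
Proof.
move=> hC; have [hz _ hrel] := hcc hC.
rewrite big_enum /= big_mkcond /=.
transitivity (\sum_l lam C l * fj b x l t).
  by apply: eq_bigr => l _; case: ifP => // /negbT /hz ->; rewrite mul0r.
rewrite /fj /fC; under eq_bigr do rewrite mulrDr.
rewrite big_split /= [X in X + _](_ : _ = 0) ?add0r //.
under eq_bigr do rewrite big_distrr /=.
rewrite exchange_big /= big1 // => q _.
transitivity (t q * \sum_l lam C l * b q l); last by rewrite hrel mulr0.
by rewrite big_distrr /=; apply: eq_bigr => l _; ring.
Qed.

Section Basis.
Variable s : seq 'I_n.
Hypotheses (hs : size s = k) (hd : dmk b s != 0).

Lemma fundamental_exists m : m \notin s -> exists C, circuit b C && fundamental s C m.
Proof.
move=> ms; have us := dmk_neq0_uniq hs hd.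
have hcard : #|m |: [set z in s]| = k.+1.
  by rewrite cardsU1 inE ms cardsE (card_uniqP us) hs.
have [C sC cC] : exists2 C : {set 'I_n}, C \subset m |: [set z in s] & circuit b C.
  by apply: circuit_subset; apply: not_indep_card; rewrite hcard.
have sub : C :\ m \subset [set z in s].
  apply/subsetP => z; rewrite in_setD1 => /andP [nzm zC].
  by move/subsetP: sC => /(_ z zC); rewrite !inE (negPf nzm).
exists C; rewrite cC /fundamental ms sub /= andbT.
apply/negPn/negP => mC; have [hz [l hl] hrel] := hcc cC.
move: hl; rewrite (dmk_rel_eq0 hs hd _ hrel) ?eqxx // => z zs.
apply: hz; apply: contra zs => zC.
have /(subsetP sub) : z \in C :\ m by rewrite in_setD1 zC andbT; apply: contraNneq mC => <-.
by rewrite inE.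
Qed.

Lemma fundamental_uniq C C' m : circuit b C -> circuit b C' ->
  fundamental s C m -> fundamental s C' m -> C = C'.
Proof.
move=> cC cC' vC vC'.
move: (vC) (vC') => /and3P [mC ms _] /and3P [mC' _ _].
have [hz _ hr] := hcc cC; have [hz' _ hr'] := hcc cC'.
pose mu z := lam C' m * lam C z - lam C m * lam C' z.
have mu0 : forall z, mu z = 0.
  apply: (dmk_rel_eq0 hs hd) => [z zs|q]; rewrite /mu.
    case: (eqVneq z m) => [->|nzm]; first by rewrite mulrC subrr.
    have zC : z \notin C by apply: contra zs => zC; exact: fundamental_mem vC zC nzm.
    have zC' : z \notin C' by apply: contra zs => zC'; exact: fundamental_mem vC' zC' nzm.
    by rewrite (hz z zC) (hz' z zC') !mulr0 subrr.
  under eq_bigr do rewrite mulrBl -!mulrA.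
  by rewrite sumrB -!big_distrr /= hr hr' !mulr0 subrr.
apply/setP => z; have /eqP := mu0 z; rewrite subr_eq0 => /eqP h.
have l1 := circuit_coeff_neq0 hcc cC mC; have l2 := circuit_coeff_neq0 hcc cC' mC'.
case: (boolP (z \in C)) => zC; case: (boolP (z \in C')) => zC' //.
- by have := mulf_neq0 l2 (circuit_coeff_neq0 hcc cC zC); rewrite h hz' // mulr0 eqxx.
- by have := mulf_neq0 l1 (circuit_coeff_neq0 hcc cC' zC'); rewrite -h hz // mulr0 eqxx.
Qed.

(* [set0] when there is no such circuit, e.g. for m in s. *)
Definition fcircuit (m : 'I_n) : {set 'I_n} :=
  odflt set0 [pick C | circuit b C && fundamental s C m].

Lemma fcircuitP m : m \notin s -> circuit b (fcircuit m) && fundamental s (fcircuit m) m.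
Proof.
move=> ms; rewrite /fcircuit; case: pickP => [C -> //|h].
by have [C] := fundamental_exists ms; rewrite h.
Qed.

End Basis.
End Circuits.

Section CircuitOperator.
Variables (R : realType) (k n : nat) (b : 'M[R[i]]_(k, n)).
Variables (lam : {set 'I_n} -> 'I_n -> R[i]) (x a : 'I_n -> R[i]).
Hypotheses (k0 : (0 < k)%N) (hcc : circuit_coeffs b lam) (ha : forall j, a j != 0).
Variables (s : seq 'I_n) (C : {set 'I_n}) (m : 'I_n).
Hypotheses (hC : circuit b C) (us : uniq s) (hs : size s = k) (hv : fundamental s C m).

Let e := enum C.
Let s' := [seq j <- s | j \notin C].
Let u := rem m e ++ s'.

Let ue : uniq e. Proof. exact: enum_uniq. Qed.
Let mem_e z : (z \in e) = (z \in C). Proof. exact: mem_enum. Qed.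
Let mem_rem_e y z : (z \in rem y e) = (z != y) && (z \in C).
Proof. by rewrite mem_rem_uniq // !inE mem_e. Qed.

Lemma perm_fundamental l : l \in C -> perm_eq (l :: (rem l e ++ s')) (m :: s).
Proof.
case/and3P: hv => mC ms _ lC; apply: uniq_perm => /=.
- rewrite cat_uniq rem_uniq // filter_uniq // andbT mem_cat negb_or mem_rem_e eqxx.
  rewrite mem_filter lC /=; apply/hasPn => z; rewrite mem_filter => /andP [zC _].
  by rewrite mem_rem_e (negPf zC) andbF.
- by rewrite ms us.
move=> z; rewrite !inE mem_cat mem_rem_e /s' mem_filter.
case: (eqVneq z l) => [->|nzl] /=.
  by case: (eqVneq l m) => [//|nlm]; rewrite (fundamental_mem hv lC nlm) orbT.
case: (eqVneq z m) => [->|nzm] //=; first by rewrite mC.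
by case: (boolP (z \in C)) => //= zC; rewrite (fundamental_mem hv zC nzm).
Qed.

Lemma size_fundamental l : l \in C -> size (rem l e ++ s') = k.
Proof. by move=> /perm_fundamental /perm_size /= [->]. Qed.

Lemma perm_fundamental_basis : perm_eq s u.
Proof. by case/and3P: hv => mC _ _; rewrite perm_sym -(perm_cons m) perm_fundamental. Qed.

Lemma prod_fundamental l t : l \in C -> inU b x t ->
  \prod_(z <- rem l e ++ s') (a z / fj b x z t) =
  (a m / fj b x m t) * \prod_(z <- s) (a z / fj b x z t) / (a l / fj b x l t).
Proof.
move=> lC ht; have := perm_big _ (perm_fundamental lC) : \prod_(z <- _) (a z / fj b x z t) = _.
rewrite !big_cons /= => <-.
by rewrite [_ * \prod_(_ <- _) _]mulrC mulfK // mulf_neq0 ?invr_eq0 ?ha ?ht.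
Qed.

Lemma dmk_fundamental l : l \in C ->
  (-1) ^+ index m e * ((-1) ^+ index l e * dmk b (rem l e ++ s')) =
  lam C l / lam C m * dmk b u.
Proof.
move=> lC; case/and3P: hv => mC ms _.
have lm := circuit_coeff_neq0 hcc hC mC.
case: (eqVneq l m) => [->|nlm]; first by rewrite signrMK divff // mul1r.
have mre : m \in rem l e by rewrite mem_rem_e eq_sym nlm.
have lre : l \in rem m e by rewrite mem_rem_e nlm.
have := @dmk_move_front _ _ _ b m [::] (rem l e) s' mre (size_fundamental lC).
have := @dmk_move_front _ _ _ b l [::] (rem m e) s' lre (size_fundamental mC).
rewrite /= remC // -/u => -> ->.
set r := rem m (rem l e) ++ s'.
have hr : (size r).+1 = k.
  by rewrite -(size_fundamental lC) size_cat (perm_size (perm_to_rem mre)) /= size_cat.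
have Cr z : z \in C -> z != m -> z != l -> z \in r.
  by move=> zC nzm nzl; rewrite mem_cat mem_rem_uniq ?rem_uniq // !inE mem_rem_e nzm nzl zC.
have dm : dmk b (m :: r) = - (lam C l * dmk b (l :: r)) / lam C m.
  by rewrite -(circuit_dmk_exchange hcc k0 hr hC mC lC nlm Cr) [RHS]mulrC mulKf.
have := index_rem2 (_ : m \in e) (_ : l \in e) (_ : m != l).
rewrite !mem_e eq_sym => /(_ mC lC nlm) idx.
rewrite dm !mulrA -!exprD -idx addSn exprS !exprD.
set sA := (-1) ^+ index m (rem l e); set sB := (-1) ^+ index l (rem m e).
have sA2 : sA * sA = 1 by rewrite -expr2 sqrr_sign.
transitivity (sA * sA * (lam C l / lam C m * sB * dmk b (l :: r))); first by ring.
by rewrite sA2 mul1r.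
Qed.

Lemma LC_fundamentalE t : LC b x a C s t =
  (-1) ^+ invs s u * (-1) ^+ index m e *
  \sum_(l <- e) (-1) ^+ index l e * a l * wmk b x a (rem l e ++ s') t.
Proof.
case/and3P: (hv) => mC ms _.
have SC : [set j in s] :&: C = C :\ m.
  apply/setP => z; rewrite !inE; case: (eqVneq z m) => [->|nzm] /=; first by rewrite (negPf ms).
  by case: (boolP (z \in C)) => zC; rewrite ?andbT ?andbF // (fundamental_mem hv zC nzm).
rewrite /LC us SC (cardsD1 m C) mC eqxx /=.
case: pickP => [l /andP [lC] | /(_ m)]; last by rewrite mC inE ms.
rewrite inE => ls; suff -> : l = m by [].
by apply/eqP; apply: contraNT ls => nlm; exact: fundamental_mem hv lC nlm.
Qed.

Lemma LC_fundamental t : inU b x t ->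
  LC b x a C s t = wmk b x a s t * (a m / fj b x m t) * fC lam C x / lam C m.
Proof.
move=> ht; case/and3P: (hv) => mC _ _.
have lm := circuit_coeff_neq0 hcc hC mC.
set P := \prod_(z <- s) (a z / fj b x z t).
have term l : l \in e -> (-1) ^+ index m e * ((-1) ^+ index l e * a l * wmk b x a (rem l e ++ s') t)
    = lam C l * fj b x l t * (dmk b u * (a m / fj b x m t) * P / lam C m).
  rewrite mem_e => lC; rewrite /wmk prod_fundamental // -/P.
  transitivity (a l * ((-1) ^+ index m e * ((-1) ^+ index l e * dmk b (rem l e ++ s'))) *
     (a m / fj b x m t * P / (a l / fj b x l t))); first by ring.
  by rewrite dmk_fundamental //; field; rewrite lm !ht ha.
rewrite LC_fundamentalE -mulrA big_distrr /= (eq_big_seq _ term).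
rewrite -big_distrl /= sum_circuit_fj // /wmk -/P.
by rewrite (@dmk_perm _ _ _ b s u [::] us perm_fundamental_basis) //=; ring.
Qed.

End CircuitOperator.

Lemma LC_not_fundamental (R : realType) k n (b : 'M[R[i]]_(k, n)) x a s C t :
  (forall m, ~~ fundamental s C m) -> LC b x a C s t = 0.
Proof.
move=> nf; rewrite /LC; case: ifP => // /andP [us /eqP hcard].
case: pickP => // m /andP [mC ms]; case/negP: (nf m).
have eqS : [set j in s] :&: C = C :\ m.
  apply/eqP; rewrite eqEcard hcard (cardsD1 m C) mC leqnn andbT.
  apply/subsetP => z; rewrite !inE => /andP [zs ->]; rewrite andbT.
  by apply: contraTneq zs => ->; rewrite inE in ms.
by rewrite /fundamental mC -eqS subsetIl andbT; rewrite inE in ms.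
Qed.

Section Quotient.
Variables (R : realType) (k n : nat) (b : 'M[R[i]]_(k, n)) (x a : 'I_n -> R[i]).

Lemma qeq_pointwise g h : (forall t, inU b x t -> g t = h t) -> qeq b x a g h.
Proof.
move=> gh; exists (fun _ _ => 0); split => [r|t ht].
  by exists 0, (fun _ => 0%N) => t _; rewrite meval0 mul0r.
by rewrite gh // subrr big1 // => r _; rewrite mul0r.
Qed.

Lemma regular_wmk c s : uniq s -> regular b x (fun t => c * wmk b x a s t).
Proof.
move=> us; exists ((c * dmk b s * \prod_(l <- s) a l)%:MP), (fun l => nat_of_bool (l \in s)).
move=> t _; rewrite mevalC /wmk prodf_div !mulrA; congr (_ / _).
rewrite big_uniq //= big_mkcond /=; apply: eq_bigr => l _.
by case: (l \in s); rewrite ?expr1 ?expr0.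
Qed.

Lemma sum_dPhi (y : 'I_k -> R[i]) t :
  \sum_r y r * dPhi b x a r t = \sum_m (\sum_r b r m * y r) * (a m / fj b x m t).
Proof.
rewrite /dPhi; under eq_bigr do rewrite big_distrr /=.
rewrite exchange_big /=; apply: eq_bigr => m _.
by rewrite big_distrl /=; apply: eq_bigr => r _; ring.
Qed.

End Quotient.

Section Expansion.
Variables (R : realType) (k n : nat) (b : 'M[R[i]]_(k, n)).
Variables (lam : {set 'I_n} -> 'I_n -> R[i]) (x a : 'I_n -> R[i]).
Hypotheses (k0 : (0 < k)%N) (hcc : circuit_coeffs b lam) (ha : forall j, a j != 0).
Variables (j : 'I_n) (s : seq 'I_n).
Hypothesis hs : size s = k.

Lemma LC_dmk0 C t : dmk b s = 0 -> circuit b C -> inU b x t -> LC b x a C s t = 0.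
Proof.
move=> hd hC ht; case: (boolP (uniq s)) => us; last by rewrite /LC (negPf us).
case: (pickP (fundamental s C)) => [m hm | nf]; last by apply: LC_not_fundamental => m; rewrite nf.
by rewrite (LC_fundamental k0 hcc ha hC us hs hm ht) /wmk hd !mul0r.
Qed.

Lemma qeq_Kj_dmk0 : dmk b s = 0 ->
  qeq b x a (fun t => a j / fj b x j t * wmk b x a s t) (Kj b lam x a j s).
Proof.
move=> hd; apply: qeq_pointwise => t ht.
rewrite /Kj big1 => [|C hC]; last by rewrite LC_dmk0 // mulr0.
by rewrite /wmk hd !mul0r mulr0.
Qed.

Hypothesis hd : dmk b s != 0.

(* The vector y of the proof idea: g_{s_q}(y) = [s_q == j] (gdual_nth), so
   y = 0 when j is not in s, and gdual m = g_m(y). *)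
Definition ydual (r : 'I_k) : R[i] :=
  \sum_(q < k | nth j s q == j) invmx (cols_mx b s)^T r q.

Definition gdual (m : 'I_n) : R[i] := \sum_r b r m * ydual r.

Lemma gdual_nth (q : 'I_k) : gdual (nth j s q) = (nth j s q == j)%:R.
Proof.
have hM : (cols_mx b s)^T *m invmx (cols_mx b s)^T = 1%:M.
  by apply: mulmxV; rewrite unitmxE det_tr unitfE -dmkE.
rewrite /gdual /ydual; under eq_bigr do rewrite big_distrr /=.
rewrite exchange_big /=.
transitivity (\sum_(q' < k | nth j s q' == j) ((cols_mx b s)^T *m invmx (cols_mx b s)^T) q q').
  apply: eq_bigr => q' _; rewrite !mxE; apply: eq_bigr => r _.
  by rewrite !mxE (nth_map j) // hs.
rewrite hM; under eq_bigr do rewrite mxE.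
case: (eqVneq (nth j s q) j) => hq.
  rewrite (bigD1 q) ?hq //= eqxx big1 ?addr0 // => q' /andP [_ nq].
  by rewrite eq_sym (negPf nq).
by rewrite big1 // => q' /eqP hq'; case: eqVneq => // eqq; rewrite eqq hq' eqxx in hq.
Qed.

Lemma gdual_mem m : m \in s -> gdual m = (m == j)%:R.
Proof.
move=> ms; have hq : (index m s < k)%N by rewrite -hs index_mem.
by have := gdual_nth (Ordinal hq); rewrite /= nth_index.
Qed.

Definition kcoef (m : 'I_n) : R[i] := if j \in s then - gdual m else (m == j)%:R.

Lemma fundamental_coeff_ratio C m : circuit b C -> fundamental s C m ->
  lam C j / lam C m = kcoef m.
Proof.
move=> hC hm; case/and3P: (hm) => mC ms _.
have lm := circuit_coeff_neq0 hcc hC mC; have [hz _ hrel] := hcc hC.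
rewrite /kcoef; case: ifP => js; last first.
  case: (eqVneq m j) => [<-|nmj]; first by rewrite divff.
  rewrite hz ?mul0r //; apply: contraFN js => jC.
  by apply: fundamental_mem hm jC _; rewrite eq_sym.
have rel0 : \sum_l lam C l * gdual l = 0.
  rewrite /gdual; under eq_bigr do rewrite big_distrr /=.
  rewrite exchange_big /= big1 // => r _.
  transitivity (ydual r * \sum_l lam C l * b r l); last by rewrite hrel mulr0.
  by rewrite big_distrr /=; apply: eq_bigr => l _; ring.
have relj : \sum_(l | l != m) lam C l * gdual l = lam C j.
  rewrite (bigD1 j) /=; last by apply: contraNneq ms => <-.
  rewrite gdual_mem // eqxx mulr1 big1 ?addr0 // => l /andP [nlm nlj].
  case: (boolP (l \in C)) => lC; last by rewrite hz ?mul0r.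
  by rewrite gdual_mem ?(fundamental_mem hm lC nlm) // (negPf nlj) mulr0.
move: rel0; rewrite (bigD1 m) //= relj => /eqP; rewrite addrC addr_eq0 => /eqP ->.
by field.
Qed.

Hypothesis hdisc : notin_disc b lam x.

Lemma circuit_term_expansion C t : circuit b C -> inU b x t ->
  lam C j / fC lam C x * LC b x a C s t = \sum_(m | m \notin s)
    (if C == fcircuit b s m then kcoef m * (a m / fj b x m t) * wmk b x a s t else 0).
Proof.
move=> hC ht; have us := dmk_neq0_uniq hs hd.
case: (pickP (fundamental s C)) => [m hm | nf]; last first.
  rewrite LC_not_fundamental ?mulr0 => [|m]; last by rewrite nf.
  rewrite big1 // => m ms; case: eqP => // eC.
  by case/andP: (fcircuitP hcc hs hd ms) => _; rewrite -eC nf.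
case/and3P: (hm) => mC ms _.
have [cF hF] := andP (fcircuitP hcc hs hd ms).
rewrite (LC_fundamental k0 hcc ha hC us hs hm ht) (bigD1 m) //=.
rewrite -(fundamental_uniq hcc hs hd hC cF hm hF) eqxx -(fundamental_coeff_ratio hC hm).
rewrite big1 ?addr0 => [|m' /andP [m's nm'm]]; last first.
  case: eqP => // eC; case/and3P: (andP (fcircuitP hcc hs hd m's)).2 => m'C _ _.
  by rewrite -eC in m'C; rewrite (fundamental_mem hm m'C nm'm) in m's.
by field; rewrite ht (circuit_coeff_neq0 hcc hC mC) (hdisc hC).
Qed.

Lemma Kj_expansion t : inU b x t ->
  Kj b lam x a j s t = \sum_(m | m \notin s) kcoef m * (a m / fj b x m t) * wmk b x a s t.
Proof.
move=> ht; rewrite /Kj (eq_bigr _ (fun C hC => circuit_term_expansion hC ht)).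
rewrite exchange_big /=; apply: eq_bigr => m ms.
rewrite (bigD1 (fcircuit b s m)) /=; last by case/andP: (fcircuitP hcc hs hd ms).
by rewrite eqxx big1 ?addr0 // => C /andP [_ /negPf ->].
Qed.

Lemma qeq_Kj_mem : j \in s ->
  qeq b x a (fun t => a j / fj b x j t * wmk b x a s t) (Kj b lam x a j s).
Proof.
move=> js; have us := dmk_neq0_uniq hs hd.
exists (fun r t => ydual r * wmk b x a s t); split => [r|t ht]; first exact: regular_wmk.
have gdual_dPhi : \sum_r ydual r * dPhi b x a r t =
    a j / fj b x j t + \sum_(m | m \notin s) gdual m * (a m / fj b x m t).
  have -> : \sum_r ydual r * dPhi b x a r t = \sum_m gdual m * (a m / fj b x m t).
    exact: sum_dPhi.
  rewrite (bigID (mem s)) /=; congr (_ + _).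
  rewrite (bigD1 j) //= gdual_mem // eqxx mul1r big1 ?addr0 // => m /andP [ms nmj].
  by rewrite gdual_mem // (negPf nmj) mul0r.
under eq_bigr do rewrite mulrAC.
rewrite -big_distrl /= gdual_dPhi Kj_expansion // /kcoef js mulrDl big_distrl /=.
by under eq_bigr do rewrite !mulNr; rewrite sumrN opprK.
Qed.

Lemma qeq_Kj_notin : j \notin s ->
  qeq b x a (fun t => a j / fj b x j t * wmk b x a s t) (Kj b lam x a j s).
Proof.
move=> js; apply: qeq_pointwise => t ht.
rewrite Kj_expansion // /kcoef (negPf js) (bigD1 j) //= eqxx mul1r big1 ?addr0 // => m.
by case/andP => _ /negPf ->; rewrite !mul0r.
Qed.

End Expansion.

Unset Implicit Arguments.
Set Strict Implicit.

Theorem corollary3p9 (R : realType) (k n : nat) (b : 'M[R[i]]_(k, n))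
  (lam : {set 'I_n} -> 'I_n -> R[i]) (x a : 'I_n -> R[i]) :
  (0 < k)%N -> (k < n)%N ->
  (forall j : 'I_n, col j b != 0) ->
  \rank b = k ->
  circuit_coeffs b lam ->
  (forall j, a j != 0) ->
  notin_disc b lam x ->
  unbalanced b x a ->
  forall (j : 'I_n) (s : seq 'I_n), size s = k ->
    qeq b x a (fun t => a j / fj b x j t * wmk b x a s t) (Kj b lam x a j s).
Proof.
move=> k0 _ _ _ hcc ha hdisc _ j s hs.
case: (eqVneq (dmk b s) 0) => hd; first exact: qeq_Kj_dmk0.
case: (boolP (j \in s)) => js; first exact: qeq_Kj_mem.
exact: qeq_Kj_notin.
Qed.
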